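(* For all integers $k,n\ge 0$, $$\sum_{i=0}^{n}\sum_{j=0}^{n-i}(-1)^i\binom{n-i}{j}\binom{k}{i}\binom{k}{j}=1.$$ *)

From mathcomp Require Import all_boot all_order all_algebra.
Set Implicit Arguments. Unset Strict Implicit. Unset Printing Implicit Defensive.

(* The inner sum over j is a Vandermonde convolution, equal to C(n - i + k, k).
   The remaining alternating sum is then telescoped by Pascal's rule: one proves
   sum_i (-1)^i C(k, i) C(n - i + k + d, n - i) = C(n + d, n) by induction on k
   for all n and d, and takes d = 0. *)

From mathcomp Require Import all_boot all_order all_algebra.
Import GRing.Theory.
Local Open Scope ring_scope.

Lemma sum_bin_mul_bin (m k : nat) :
  (\sum_(0 <= j < m.+1) 'C(m, j) * 'C(k, j) = 'C(m + k, m))%N.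
Proof.
rewrite big_nat_rev (@eq_big_nat _ _ _ _ _ _ (fun j => 'C(m, j) * 'C(k, m - j))%N).
  by rewrite big_mkord binomial.Vandermonde.
by move=> j /andP[_ lt_j]; rewrite add0n subSS bin_sub.
Qed.

Lemma sum_sign_binS (R : pzRingType) (k n : nat) (f : nat -> R) :
  \sum_(0 <= i < n.+1) (-1) ^+ i * 'C(k.+1, i)%:R * f i =
  \sum_(0 <= i < n.+1) (-1) ^+ i * 'C(k, i)%:R * f i
  - \sum_(0 <= i < n) (-1) ^+ i * 'C(k, i)%:R * f i.+1.
Proof.
rewrite !big_nat_recl // !bin0 -addrA; congr (_ + _).
rewrite -sumrN -big_split /=; apply: eq_bigr => i _.
by rewrite binS natrD mulrDr mulrDl exprS mulN1r !mulNr.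
Qed.

Lemma sum_sign_bin_mul_bin (R : pzRingType) (k d n : nat) :
  \sum_(0 <= i < n.+1) (-1) ^+ i * ('C(k, i) * 'C(n - i + (k + d), n - i))%:R
  = 'C(n + d, n)%:R :> R.
Proof.
elim: k d n => [|k IHk] d n.
  rewrite big_nat_recl // big1_seq => [|i _]; last by rewrite bin0n mul0n mulr0.
  by rewrite addr0 expr0 mul1r bin0 mul1n subn0.
under eq_bigr do rewrite natrM mulrA.
rewrite sum_sign_binS.
have IHk' m : \sum_(0 <= i < m.+1)
    (-1) ^+ i * 'C(k, i)%:R * 'C(m - i + (k + d).+1, m - i)%:R
    = 'C(m + d.+1, m)%:R :> R.
  by rewrite -addnS -IHk; apply: eq_bigr => i _; rewrite natrM mulrA.
rewrite IHk'; case: n => [|m]; first by rewrite big_geq // subr0 !bin0.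
under [X in _ - X]eq_bigr do rewrite subSS.
by rewrite IHk' addnS binS natrD -addSnnS addrK.
Qed.

Theorem corollary3p4 (k n : nat) :
  \sum_(0 <= i < n.+1) \sum_(0 <= j < (n - i).+1)
     ((-1) ^+ i * ('C(n - i, j) * 'C(k, i) * 'C(k, j))%:R : int) = 1.
Proof.
transitivity ('C(n + 0, n)%:R : int); last by rewrite addn0 binn.
rewrite -(sum_sign_bin_mul_bin _ k 0 n); apply: eq_bigr => i _.
rewrite -mulr_sumr -natr_sum addn0 -sum_bin_mul_bin big_distrr /=.
by congr (_ * _%:R); apply: eq_bigr => j _; rewrite mulnCA mulnA.
Qed.
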